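(* Let PS1 and PS2 be pure strategies (as in the context) with $m_{PS1}$ finite, and suppose PS2 is inferior to PS1, i.e. $\Delta_{PS1}(X)\ge\Delta_{PS2}(X)$ for every $X\in\mathcal{S}_{\mathrm{non}}$ and $\Delta_{PS1}(X)>\Delta_{PS2}(X)$ for some $X\in\mathcal{S}_{\mathrm{non}}$. Then for any mixed strategy MS derived from PS1 and PS2, $\max\{m_{MS}(X):X\in\mathcal{S}\}\ge\max\{m_{PS1}(X):X\in\mathcal{S}\}$.
   Context: A fitness function $f$ on a finite set is to be maximised. A metaheuristic generates populations $\Phi_0,\Phi_1,\dots$. Let $\mathcal{S}$ be the finite set of all populations, $\mathcal{S}_{\mathrm{opt}}$ those containing at least one optimal solution, $\mathcal{S}_{\mathrm{non}}=\mathcal{S}\setminus\mathcal{S}_{\mathrm{opt}}$. The sequence is a time-homogeneous Markov chain on $\mathcal{S}$ with transition probabilities $P(X,Y)=\Pr(\Phi_{t+1}=Y\mid\Phi_t=X)$, every state of $\mathcal{S}_{\mathrm{opt}}$ absorbing. The expected hitting time $m(X)\in[0,\infty]$ is the expected number of generations until first entering $\mathcal{S}_{\mathrm{opt}}$ from $\Phi_0=X$ ($m(X)=0$ on $\mathcal{S}_{\mathrm{opt}}$). A pure strategy is such a time-independent transition matrix. PS1, PS2 are pure strategies with transition matrices $P_1,P_2$ on the same $\mathcal{S}$ (with $\mathcal{S}_{\mathrm{opt}}$ absorbing), expected hitting times $m_{PS1},m_{PS2}$. A mixed strategy MS derived from PS1 and PS2 assigns to each $X\in\mathcal{S}$ probabilities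 $P_X(PS1)\in[0,1]$, $P_X(PS2)=1-P_X(PS1)$, and has transition matrix $P_{MS}(X,Y)=P_X(PS1)P_1(X,Y)+P_X(PS2)P_2(X,Y)$, with expected hitting time $m_{MS}$. With $d(X)=m_{PS1}(X)$, for $X\in\mathcal{S}_{\mathrm{non}}$: $\Delta_{PS1}(X)=d(X)-\sum_{Y\in\mathcal{S}_{\mathrm{non}}}P_1(X,Y)d(Y)$, $\Delta_{PS2}(X)=d(X)-\sum_{Y\in\mathcal{S}_{\mathrm{non}}}P_2(X,Y)d(Y)$. *)

From mathcomp Require Import all_boot all_order all_algebra.
From mathcomp Require Import all_classical all_reals.
From mathcomp Require Import ereal topology normedtype sequences.
Set Implicit Arguments. Unset Strict Implicit. Unset Printing Implicit Defensive.
Import Order.TTheory GRing.Theory Num.Theory.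
Local Open Scope ring_scope.

Section Chains.
Variables (R : realType) (S : finType).

Definition stochastic (P : S -> S -> R) : Prop :=
  (forall X Y, 0 <= P X Y) /\ (forall X, \sum_(Y : S) P X Y = 1).

Definition absorbing_on (Sopt : {set S}) (P : S -> S -> R) : Prop :=
  forall X, X \in Sopt -> P X X = 1.

Fixpoint mpow (P : S -> S -> R) (t : nat) : S -> S -> R :=
  match t with
  | 0 => fun X Y => (X == Y)%:R
  | t'.+1 => fun X Y => \sum_(Z : S) mpow P t' X Z * P Z Y
  end.

(* Pr(T > t | Phi_0 = X), T = first hitting time of Sopt; since Sopt is
   absorbing, T <= t iff Phi_t \in Sopt. *)
Definition tail_prob (Sopt : {set S}) (P : S -> S -> R) (X : S) (t : nat) : R :=
  1 - \sum_(Y in Sopt) mpow P t X Y.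

(* Expected hitting time m(X) = E[T] = sum_{t>=0} Pr(T > t), in [0, +oo]. *)
Definition hitting_time (Sopt : {set S}) (P : S -> S -> R) (X : S) : \bar R :=
  (\sum_(0 <= t <oo) (tail_prob Sopt P X t)%:E)%E.

Definition mixed (p : S -> R) (P1 P2 : S -> S -> R) : S -> S -> R :=
  fun X Y => p X * P1 X Y + (1 - p X) * P2 X Y.

Definition drift (Sopt : {set S}) (d : S -> R) (P : S -> S -> R) (X : S) : R :=
  d X - \sum_(Y in ~: Sopt) P X Y * d Y.

Definition emax (f : S -> \bar R) : \bar R := (\big[maxe/-oo]_(X : S) f X)%E.

End Chains.

From mathcomp Require Import all_boot all_order all_algebra.
From mathcomp Require Import all_classical all_reals.
From mathcomp Require Import ereal topology normedtype sequences.
From mathcomp Require Import ring lra.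
Import Order.TTheory GRing.Theory Num.Theory.
Local Open Scope ring_scope.

(* The expected hitting time of an absorbing chain is the series of the
   survival probabilities a_t(X) = Pr(Phi_t \notin Sopt), and these satisfy
   a_0 = 1 and a_{t+1} = P a_t on the non-optimal states.  Hence any
   nonnegative d with drift d P <= 1 off Sopt satisfies d <= s_n + (max d) a_n,
   where s_n = a_0 + ... + a_{n-1}; if the hitting time were finite and below
   d X, the a_n would stay bounded away from 0 and s_n would diverge.
   The hitting time of PS1 itself has drift at most 1 for P1, and by
   inferiority at most 1 for P2, hence for every mixture of the two; so the
   hitting time of any mixed strategy dominates that of PS1 state by state. *)

Set Implicit Arguments. Unset Strict Implicit. Unset Printing Implicit Defensive.

Section Stochastic.
Variables (R : realType) (S : finType) (P : S -> S -> R).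
Hypothesis P_stoch : stochastic P.

Lemma mpow_ge0 t X Y : 0 <= mpow P t X Y.
Proof.
elim: t X Y => [|t IH] X Y /=; first by rewrite ler0n.
by apply: sumr_ge0 => Z _; apply: mulr_ge0 => //; case: P_stoch.
Qed.

Lemma sum_mpow t X : \sum_Y mpow P t X Y = 1.
Proof.
elim: t X => [|t IH] X /=.
  by rewrite (bigD1 X) //= eqxx big1 ?addr0 // => Y /negbTE; rewrite eq_sym => ->.
rewrite exchange_big /= -[RHS](IH X); apply: eq_bigr => Z _.
by rewrite -mulr_sumr; case: P_stoch => _ ->; rewrite mulr1.
Qed.

End Stochastic.

Lemma mpowSl (R : realType) (S : finType) (P : S -> S -> R) t X Y :
  mpow P t.+1 X Y = \sum_Z P X Z * mpow P t Z Y.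
Proof.
elim: t X Y => [|t IH] X Y.
  rewrite /= (bigD1 X) //= eqxx mul1r big1; last first.
    by move=> Z /negbTE; rewrite eq_sym => ->; rewrite mul0r.
  rewrite (bigD1 Y) //= eqxx mulr1 big1 ?addr0 // => Z /negbTE ->.
  by rewrite mulr0.
rewrite -[LHS]/(\sum_Z mpow P t.+1 X Z * P Z Y).
under eq_bigr do rewrite IH mulr_suml.
rewrite exchange_big; apply: eq_bigr => Z _ /=.
by rewrite mulr_sumr; apply: eq_bigr => W _; rewrite mulrA.
Qed.

Section AbsorbingChain.
Variables (R : realType) (S : finType) (Sopt : {set S}) (P : S -> S -> R).
Hypotheses (P_stoch : stochastic P) (P_abs : absorbing_on Sopt P).

Lemma absorbing_offdiag X Y : X \in Sopt -> Y != X -> P X Y = 0.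
Proof.
move=> XS YX; have [P_ge0 P_sum] := P_stoch.
have := P_sum X; rewrite (bigD1 X) //= P_abs // => /eqP.
rewrite -subr_eq0 addrC addrK => /eqP /psumr_eq0P; apply => //.
Qed.

Lemma mpow_absorbing t X Y : X \in Sopt -> mpow P t X Y = (X == Y)%:R.
Proof.
move=> XS; elim: t Y => [|t IH] Y //=; under eq_bigr do rewrite IH.
rewrite (bigD1 X) // eqxx mul1r big1 => [|Z ZX]; last first.
  by rewrite eq_sym (negbTE ZX) mul0r.
rewrite Monoid.mulm1.
by have [<-|YX] := eqVneq X Y; rewrite ?P_abs // absorbing_offdiag // eq_sym.
Qed.

Definition survival t X := \sum_(Y in ~: Sopt) mpow P t X Y.

Definition survival_psum n X := \sum_(0 <= t < n) survival t X.

Lemma tail_probE X t : tail_prob Sopt P X t = survival t X.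
Proof.
rewrite /tail_prob -(sum_mpow P_stoch t X) (bigID (mem Sopt)) /= addrC addrK.
by apply: eq_bigl => Y; rewrite inE.
Qed.

Lemma survival_ge0 t X : 0 <= survival t X.
Proof. by apply: sumr_ge0 => Y _; apply: mpow_ge0. Qed.

Lemma survival_absorbing t X : X \in Sopt -> survival t X = 0.
Proof.
move=> XS; apply: big1 => Y; rewrite inE => YS; rewrite mpow_absorbing //.
by case: eqP => // XY; rewrite -XY XS in YS.
Qed.

Lemma survival0 X : X \in ~: Sopt -> survival 0 X = 1.
Proof.
move=> XS; rewrite /survival (bigD1 X) //= eqxx big1 ?addr0 // => Y /andP[_].
by rewrite eq_sym => /negbTE ->.
Qed.

Lemma survivalS t X :
  survival t.+1 X = \sum_(Z in ~: Sopt) P X Z * survival t Z.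
Proof.
rewrite /survival; under eq_bigr do rewrite mpowSl.
rewrite exchange_big /= (bigID (mem Sopt)) /= big1 ?add0r => [|Z ZS]; last first.
  by rewrite -mulr_sumr -/(survival t Z) survival_absorbing // mulr0.
by apply: eq_big => [Z|Z _]; rewrite ?inE // mulr_sumr.
Qed.

Lemma survival_psumS n X : X \in ~: Sopt ->
  survival_psum n.+1 X = 1 + \sum_(Z in ~: Sopt) P X Z * survival_psum n Z.
Proof.
move=> XS; rewrite /survival_psum big_nat_recl // survival0 //; congr (_ + _).
under eq_bigr do rewrite survivalS.
by rewrite exchange_big /=; apply: eq_bigr => Z _; rewrite mulr_sumr.
Qed.

Lemma survival_psum_lbound c n X :
  (forall t, c <= survival t X) -> n%:R * c <= survival_psum n X.
Proof.
move=> c_le; rewrite /survival_psum.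
apply: le_trans (ler_sum _ (fun t _ => c_le t)).
by rewrite sumr_const_nat subn0 mulr_natl.
Qed.

Lemma hitting_timeE X :
  hitting_time Sopt P X = (\sum_(0 <= t <oo) (survival t X)%:E)%E.
Proof. by apply: eq_eseriesr => t _; rewrite tail_probE. Qed.

Lemma hitting_time_ge0 X : (0 <= hitting_time Sopt P X)%E.
Proof.
by rewrite hitting_timeE; apply: nneseries_ge0 => t _ _; rewrite lee_fin survival_ge0.
Qed.

Lemma hitting_time_absorbing X : X \in Sopt -> hitting_time Sopt P X = 0%E.
Proof.
by move=> XS; rewrite hitting_timeE; apply: eseries0 => t _ _; rewrite survival_absorbing.
Qed.

Lemma survival_psum_le_hitting_time n X :
  ((survival_psum n X)%:E <= hitting_time Sopt P X)%E.
Proof.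
rewrite hitting_timeE /survival_psum -sumEFin.
by apply: nneseries_lim_ge => t _ _; rewrite lee_fin survival_ge0.
Qed.

Lemma hitting_time_le X (B : R) :
  (forall n, survival_psum n X <= B) -> (hitting_time Sopt P X <= B%:E)%E.
Proof.
move=> le_B; rewrite hitting_timeE; apply: lime_le.
  by apply: is_cvg_nneseries => t _; rewrite lee_fin survival_ge0.
by apply: nearW => n; rewrite sumEFin lee_fin le_B.
Qed.

Lemma hitting_time_survival_lbound X (c : R) :
  0 < c -> (forall t, c <= survival t X) -> hitting_time Sopt P X = +oo%E.
Proof.
move=> c_gt0 c_le; have := hitting_time_ge0 X.
case E: (hitting_time Sopt P X) => [r| |] // _; exfalso.
have := survival_psum_le_hitting_time (Num.truncn (r / c)).+1 X; rewrite E lee_fin.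
have := survival_psum_lbound (Num.truncn (r / c)).+1 c_le.
have : r / c < (Num.truncn (r / c)).+1%:R by apply: truncnS_gt.
have : r / c * c = r by rewrite divfK // gt_eqF.
nra.
Qed.

Lemma drift_hitting_time_le1 X :
  (forall Y, hitting_time Sopt P Y < +oo)%E -> X \in ~: Sopt ->
  drift Sopt (fun Y => fine (hitting_time Sopt P Y)) P X <= 1.
Proof.
move=> fin XS; set d := fun Y => fine (hitting_time Sopt P Y).
have hd Y : hitting_time Sopt P Y = (d Y)%:E.
  by rewrite /d fineK // ge0_fin_numE // hitting_time_ge0.
have [P_ge0 _] := P_stoch.
have d_ge0 Y : 0 <= d Y by rewrite /d fine_ge0 // hitting_time_ge0.
rewrite /drift lerBlDr -lee_fin -hd; apply: hitting_time_le => -[|n].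
  by rewrite /survival_psum big_geq // addr_ge0 // sumr_ge0 // => Z _; rewrite mulr_ge0.
rewrite survival_psumS // lerD2l; apply: ler_sum => Z _; apply: ler_wpM2l => //.
by rewrite -lee_fin -hd survival_psum_le_hitting_time.
Qed.

Lemma hitting_time_ge_of_drift_le1 (d : S -> R) X :
  (forall Y, 0 <= d Y) ->
  (forall Y, Y \in ~: Sopt -> drift Sopt d P Y <= 1) ->
  X \in ~: Sopt -> ((d X)%:E <= hitting_time Sopt P X)%E.
Proof.
move=> d_ge0 drift_le XS; set D := \big[Num.max/0]_Y d Y.
have le_D Y : d Y <= D by apply: le_bigmax.
have [P_ge0 _] := P_stoch.
have d_le n Y : Y \in ~: Sopt -> d Y <= survival_psum n Y + D * survival n Y.
  elim: n Y => [|n IH] Y YS.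
    by rewrite /survival_psum big_geq // add0r survival0 // mulr1.
  rewrite survival_psumS // survivalS // mulr_sumr -addrA -big_split /=.
  apply: le_trans (_ : 1 + \sum_(Z in ~: Sopt) P Y Z * d Z <= _).
    by have := drift_le Y YS; rewrite /drift; lra.
  rewrite lerD2l; apply: ler_sum => Z ZS.
  by rewrite mulrCA -mulrDr; apply: ler_wpM2l => //; apply: IH.
case E: (hitting_time Sopt P X) => [r| |]; last 2 first.
- by rewrite leey.
- by have := hitting_time_ge0 X; rewrite E.
rewrite lee_fin leNgt; apply/negP => r_lt.
have r_ge0 : 0 <= r by have := hitting_time_ge0 X; rewrite E lee_fin.
have D_gt0 : 0 < D by apply: le_lt_trans r_ge0 (lt_le_trans r_lt (le_D X)).
suff : hitting_time Sopt P X = +oo%E by rewrite E.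
apply: (@hitting_time_survival_lbound _ ((d X - r) / D)).
  by rewrite divr_gt0 // subr_gt0.
move=> t; rewrite ler_pdivrMr //.
have := survival_psum_le_hitting_time t X; rewrite E lee_fin.
by have := d_le t X XS; lra.
Qed.

End AbsorbingChain.

Section Mixing.
Variables (R : realType) (S : finType) (Sopt : {set S}) (P1 P2 : S -> S -> R).
Variable p : S -> R.
Hypothesis p_prob : forall X, 0 <= p X <= 1.

Lemma stochastic_mixed : stochastic P1 -> stochastic P2 -> stochastic (mixed p P1 P2).
Proof.
move=> [P1_ge0 P1_sum] [P2_ge0 P2_sum]; split=> [X Y | X].
  have /andP[p_ge0 p_le1] := p_prob X.
  by rewrite /mixed addr_ge0 // mulr_ge0 // subr_ge0.
by rewrite /mixed big_split /= -!mulr_sumr P1_sum P2_sum; lra.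
Qed.

Lemma absorbing_mixed :
  absorbing_on Sopt P1 -> absorbing_on Sopt P2 -> absorbing_on Sopt (mixed p P1 P2).
Proof. by move=> ab1 ab2 X XS; rewrite /mixed ab1 // ab2 //; lra. Qed.

Lemma drift_mixed (d : S -> R) X :
  drift Sopt d (mixed p P1 P2) X =
  p X * drift Sopt d P1 X + (1 - p X) * drift Sopt d P2 X.
Proof.
rewrite /drift /mixed; under eq_bigr do rewrite mulrDl -!mulrA.
by rewrite big_split /= -!mulr_sumr; ring.
Qed.

End Mixing.

Theorem corollary3 (R : realType) (S : finType) (Sopt : {set S})
    (P1 P2 : S -> S -> R) :
  stochastic P1 -> stochastic P2 ->
  absorbing_on Sopt P1 -> absorbing_on Sopt P2 ->
  (forall X, hitting_time Sopt P1 X < +oo)%E ->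
  (forall X, X \in ~: Sopt ->
     drift Sopt (fun Y => fine (hitting_time Sopt P1 Y)) P2 X
     <= drift Sopt (fun Y => fine (hitting_time Sopt P1 Y)) P1 X) ->
  (exists2 X, X \in ~: Sopt &
     drift Sopt (fun Y => fine (hitting_time Sopt P1 Y)) P2 X
     < drift Sopt (fun Y => fine (hitting_time Sopt P1 Y)) P1 X) ->
  forall p : S -> R, (forall X, 0 <= p X <= 1) ->
  (emax (hitting_time Sopt P1) <= emax (hitting_time Sopt (mixed p P1 P2)))%E.
Proof.
move=> st1 st2 ab1 ab2 fin1 inferior _ p p_prob.
set d := fun Y => fine (hitting_time Sopt P1 Y) in inferior *.
have stm := stochastic_mixed p_prob st1 st2.
have abm := absorbing_mixed p ab1 ab2.
have drift_le1 X : X \in ~: Sopt -> drift Sopt d (mixed p P1 P2) X <= 1.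
  move=> XS; rewrite drift_mixed; have /andP[p_ge0 p_le1] := p_prob X.
  have := drift_hitting_time_le1 st1 ab1 fin1 XS; have := inferior X XS; nra.
apply: le_bigmax2 => X _.
have [XS|XN] := boolP (X \in Sopt).
  by rewrite hitting_time_absorbing // hitting_time_ge0.
have XS : X \in ~: Sopt by rewrite inE.
have -> : hitting_time Sopt P1 X = (d X)%:E.
  by rewrite /d fineK // ge0_fin_numE ?hitting_time_ge0.
apply: (hitting_time_ge_of_drift_le1 stm abm) => // Y.
by rewrite /d fine_ge0 // hitting_time_ge0.
Qed.
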